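(* Let $q$ be a prime power, $k,b,t$ positive integers and $f:\mathbb{F}_q^k\to\mathrm{Im}(f)$ a function. For any subset $\{\boldsymbol{x}_1,\ldots,\boldsymbol{x}_M\}\subseteq\mathbb{F}_q^k$, \[ r_b^f(k,t)\ge N_b\big(\boldsymbol{B}_f^{(1)}(t,\boldsymbol{x}_1,\ldots,\boldsymbol{x}_M)\big). \] Moreover, if $|\mathrm{Im}(f)|\ge 2$ and $t>b-1$, then $r_b^f(k,t)\ge 2(t-b+1)$.
   Context: For $\boldsymbol{z}=(z_0,\ldots,z_{n-1})\in\mathbb{F}_q^n$, the $b$-symbol distance of $\boldsymbol{z},\boldsymbol{w}\in\mathbb{F}_q^n$ is $d_b(\boldsymbol{z},\boldsymbol{w})=$ the number of $i\in\{0,\ldots,n-1\}$ with $(z_i,\ldots,z_{i+b-1})\neq(w_i,\ldots,w_{i+b-1})$ (indices mod $n$). A systematic encoding $\mathrm{Enc}(\boldsymbol{x})=(\boldsymbol{x},p(\boldsymbol{x}))\in\mathbb{F}_q^{k+r}$ is a function-correcting $b$-symbol code for $f$ if $d_b(\mathrm{Enc}(\boldsymbol{x}_1),\mathrm{Enc}(\boldsymbol{x}_2))\ge 2t+1$ whenever $f(\boldsymbol{x}_1)\ne f(\boldsymbol{x}_2)$; $r_b^f(k,t)$ is the smallest $r$ for which one exists. For an $M\times M$ nonnegative integer matrix $\boldsymbol{B}$, $N_b(\boldsymbol{B})$ is the smallest $r$ such that there exist $\boldsymbol{p}_1,\ldots,\boldsymbol{p}_M\in\mathbb{F}_q^r$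 (in some ordering) with $d_b(\boldsymbol{p}_i,\boldsymbol{p}_j)\ge[\boldsymbol{B}]_{ij}$ for all $i,j$. $[\boldsymbol{B}_f^{(1)}(t,\boldsymbol{x}_1,\ldots,\boldsymbol{x}_M)]_{ij}=\max\{2t-b+2-d_b(\boldsymbol{x}_i,\boldsymbol{x}_j),0\}$ if $f(\boldsymbol{x}_i)\ne f(\boldsymbol{x}_j)$ and $0$ otherwise. *)

From Stdlib Require Import ClassicalEpsilon.
From mathcomp Require Import all_boot all_order all_algebra.
Set Implicit Arguments. Unset Strict Implicit. Unset Printing Implicit Defensive.
Import GRing.Theory.
Local Open Scope ring_scope.

(* Least natural number satisfying P (if some natural number satisfies P,
   this is the genuine minimum; otherwise an unspecified value). *)
Definition least (P : nat -> Prop) : nat :=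
  epsilon (inhabits 0%N) (fun n => P n /\ forall m, P m -> (n <= m)%N).

Definition cyc (F : finFieldType) (n : nat) (z : n.-tuple F) (m : nat) : F :=
  nth 0 z (m %% n).

Definition dsym (F : finFieldType) (b n : nat) (z w : n.-tuple F) : nat :=
  #|[set i : 'I_n | [exists j : 'I_b, cyc z (i + j) != cyc w (i + j)]]|.

(* Existence of a systematic function-correcting b-symbol code with
   redundancy r:  Enc(x) = (x, p x). *)
Definition fcbsc_exists (F : finFieldType) (T : eqType) (k : nat)
  (f : k.-tuple F -> T) (b t r : nat) : Prop :=
  exists p : k.-tuple F -> r.-tuple F,
    forall x1 x2, f x1 != f x2 ->
      (2 * t + 1 <= dsym b (cat_tuple x1 (p x1)) (cat_tuple x2 (p x2)))%N.

Definition rbf (F : finFieldType) (T : eqType) (k : nat)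
  (f : k.-tuple F -> T) (b t : nat) : nat :=
  least (fcbsc_exists f b t).

Definition Nb (F : finFieldType) (b M : nat) (B : 'M[nat]_M) : nat :=
  least (fun r => exists p : 'I_M -> r.-tuple F,
           forall i j, (B i j <= dsym b (p i) (p j))%N).

(* B_f^(1)(t, x_1, ..., x_M); the entry max{2t-b+2-d_b, 0} is computed
   with truncated nat subtraction, which coincides with it. *)
Definition Bf1 (F : finFieldType) (T : eqType) (k : nat)
  (f : k.-tuple F -> T) (b t M : nat) (x : 'I_M -> k.-tuple F) : 'M[nat]_M :=
  \matrix_(i < M, j < M)
    (if f (x i) != f (x j) then (2 * t + 2 - b - dsym b (x i) (x j))%N else 0%N).

From Stdlib Require Import Classical ClassicalEpsilon.
From mathcomp Require Import all_boot all_order all_algebra zify.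
Set Implicit Arguments. Unset Strict Implicit. Unset Printing Implicit Defensive.

(* Both bounds come from one inequality: cutting the cyclic word (x, p) into its blocks
   x and p loses at most b - 1 differing windows,
     d_b((x, p), (x', p')) <= d_b(x, x') + d_b(p, p') + b - 1.
   For a code, the left side is at least 2t + 1 whenever f(x) <> f(x'), so the
   redundancies p(x_i) satisfy the constraints B_f^(1), giving the first bound.
   For the second, changing x_1 into x_2 one coordinate at a time yields two words with
   different f-values that differ in a single coordinate; their b-symbol distance is at
   most b, and that of their redundancies at most r, so 2t + 1 <= b + r + b - 1. *)

Definition window_neq (F : finFieldType) b n (z w : n.-tuple F) (i : nat) : bool :=
  [exists j : 'I_b, cyc z (i + j) != cyc w (i + j)].

Lemma dsym_count (F : finFieldType) b n (z w : n.-tuple F) :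
  dsym b z w = count (window_neq b z w) (iota 0 n).
Proof. by rewrite /dsym cardsE cardE -val_enum_ord count_map -size_filter enumT. Qed.

Lemma window_neq_of_cyc_neq (F : finFieldType) b n (z w : n.-tuple F) i m :
  i <= m < i + b -> cyc z m != cyc w m -> window_neq b z w i.
Proof.
move=> /andP[le_im lt_m] neq; have lt_mi : m - i < b by lia.
by apply/existsP; exists (Ordinal lt_mi); rewrite /= subnKC.
Qed.

Section Concatenation.

Variables (F : finFieldType) (k r b : nat).
Variables (x1 x2 : k.-tuple F) (p1 p2 : r.-tuple F).

Local Notation n := (k + r).
Local Notation z1 := (cat_tuple x1 p1).
Local Notation z2 := (cat_tuple x2 p2).

Lemma cyc_cat_x (x : k.-tuple F) (p : r.-tuple F) s :
  s %% n < k -> cyc (cat_tuple x p) s = nth 0%R x (s %% n).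
Proof. by move=> lt_sk; rewrite /cyc nth_cat size_tuple lt_sk. Qed.

Lemma cyc_cat_p (x : k.-tuple F) (p : r.-tuple F) s :
  k <= s %% n -> cyc (cat_tuple x p) s = nth 0%R p (s %% n - k).
Proof. by move=> le_ks; rewrite /cyc nth_cat size_tuple ltnNge le_ks. Qed.

Definition window_meets_p i :=
  [exists j : 'I_b, (k <= (i + j) %% n) && (cyc z1 (i + j) != cyc z2 (i + j))].

Lemma window_cat_x i : i + b <= k -> window_neq b z1 z2 i -> window_neq b x1 x2 i.
Proof.
move=> le_ibk /existsP[j neq]; apply/existsP; exists j.
have lt_ijk : i + j < k by have := ltn_ord j; lia.
move: neq; rewrite !cyc_cat_x !modn_small //; try lia.
by rewrite /cyc modn_small.
Qed.

Lemma window_cat_p i : k <= i < n -> window_meets_p i -> window_neq b p1 p2 (i - k).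
Proof.
move=> /andP[le_ki lt_in] /existsP[j /andP[le_ks neq]].
move: neq; rewrite !cyc_cat_p // => neq.
set s := (i + j) %% n in le_ks neq; set q := (i + j) %/ n.
have def_ij : i + j = q * k + q * r + s by rewrite /s /q {1}(divn_eq (i + j) n) mulnDr.
have lt_sn : s < n by rewrite ltn_pmod //; lia.
have le_qk_j : q * k <= j.
  have [->|q_gt0] := posnP q; first by rewrite mul0n.
  by have := leq_pmull r q_gt0; lia.
apply: (window_neq_of_cyc_neq (m := q * r + (s - k))); first by have := ltn_ord j; lia.
by rewrite /cyc modnMDl modn_small //; lia.
Qed.

Lemma window_cat_wrap i : k <= i < n -> window_neq b z1 z2 i -> ~~ window_meets_p i ->
  n < i + b /\ (r <= i -> window_neq b x1 x2 (i - r)).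
Proof.
move=> /andP[le_ki lt_in] /existsP[j neq] not_p.
have lt_sk : (i + j) %% n < k.
  by rewrite ltnNge; apply: contra not_p => le_ks; apply/existsP; exists j; rewrite le_ks.
move: neq; rewrite !cyc_cat_x // => neq.
set s := (i + j) %% n in lt_sk neq; set q := (i + j) %/ n.
have def_ij : i + j = q * k + q * r + s by rewrite /s /q {1}(divn_eq (i + j) n) mulnDr.
have q_gt0 : 0 < q by rewrite lt0n; apply/eqP => q0; move: def_ij; rewrite q0; lia.
have := leq_pmull k q_gt0; have := leq_pmull r q_gt0; have := ltn_ord j.
move=> lt_jb le_r_qr le_k_qk; split; first by lia.
move=> le_ri; apply: (window_neq_of_cyc_neq (m := q * k + s)); first by lia.
by rewrite /cyc modnMDl modn_small.
Qed.

(* A differing window of z at i is charged to: the window i of x if it stays inside x;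
   the window i - k of p if it meets a difference inside p; otherwise it wraps around
   into x and is charged to the wrapping window i - r of x.  Windows crossing the junction
   k, and wrapping windows with i < r, take one of the b - 1 spare slots n, ..., n + b - 2;
   a crossing window i' and a wrapping window i share a slot only if i = i' + r >= r. *)
Definition window_slot i :=
  if i < k then (if i + b <= k then i else n + (k - 1 - i))
  else if window_meets_p i then i
  else if r <= i then i - r else n + (n - 1 - i).

Definition window_slots : seq nat :=
  [seq i <- iota 0 k | window_neq b x1 x2 i] ++
  [seq i <- iota k r | window_neq b p1 p2 (i - k)] ++ iota n b.-1.

Lemma size_window_slots : size window_slots = dsym b x1 x2 + dsym b p1 p2 + b.-1.
Proof.
rewrite !size_cat !size_filter size_iota !dsym_count addnA.
have -> : iota k r = map (addn k) (iota 0 r) by rewrite -iotaDl addn0.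
by rewrite count_map; congr (_ + _ + _); apply: eq_count => i /=; rewrite addKn.
Qed.

Lemma window_slots_x m : m < k -> window_neq b x1 x2 m -> m \in window_slots.
Proof. by move=> lt_mk neq; rewrite mem_cat mem_filter mem_iota neq lt_mk. Qed.

Lemma window_slots_p m : k <= m < n -> window_neq b p1 p2 (m - k) -> m \in window_slots.
Proof. by move=> range neq; rewrite !mem_cat !mem_filter !mem_iota /= neq range orbT. Qed.

Lemma window_slots_spare m : n <= m < n + b.-1 -> m \in window_slots.
Proof. by move=> range; rewrite !mem_cat mem_iota range !orbT. Qed.

Lemma window_slot_mem i : i < n -> window_neq b z1 z2 i -> window_slot i \in window_slots.
Proof.
move=> lt_in neq; rewrite /window_slot.
case: ltnP => [lt_ik | le_ki].
  case: leqP => [le_ibk | lt_kib]; first by apply: window_slots_x; rewrite ?window_cat_x.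
  by apply: window_slots_spare; lia.
have range_i : k <= i < n by rewrite le_ki.
case: ifPn => [meets | not_p]; first by apply: window_slots_p; rewrite ?window_cat_p.
have [lt_nib wrap_x] := window_cat_wrap range_i neq not_p.
case: leqP => [le_ri | lt_ir]; last by apply: window_slots_spare; lia.
by apply: window_slots_x; [lia | exact: wrap_x].
Qed.

Lemma window_slot_inj :
  {in [pred i | (i < n) && window_neq b z1 z2 i] &, injective window_slot}.
Proof.
have reach_end i : i < n -> window_neq b z1 z2 i ->
    ~~ window_meets_p i ==> (k <= i) ==> (n < i + b).
  move=> lt_in neq; apply/implyP => not_p; apply/implyP => le_ki.
  by have [] := window_cat_wrap (i := i) (introT andP (conj le_ki lt_in)) neq not_p.
move=> i1 i2 /andP[lt1 /(reach_end _ lt1) end1] /andP[lt2 /(reach_end _ lt2) end2].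
rewrite /window_slot; case: (window_meets_p i1) end1; case: (window_meets_p i2) end2 => /=.
all: move=> /implyP end2 /implyP end1; do ![case: ifP]; lia.
Qed.

Lemma dsym_cat_le : dsym b z1 z2 <= dsym b x1 x2 + dsym b p1 p2 + b.-1.
Proof.
rewrite -size_window_slots dsym_count -size_filter -(size_map window_slot).
apply: uniq_leq_size.
  rewrite map_inj_in_uniq ?filter_uniq ?iota_uniq // => i1 i2.
  rewrite !mem_filter !mem_iota /= => /andP[neq1 lt1] /andP[neq2 lt2].
  by apply: window_slot_inj; rewrite inE /= ?neq1 ?neq2 andbT.
move=> m /mapP[i]; rewrite mem_filter mem_iota => /andP[neq lt_in] ->.
by apply: window_slot_mem.
Qed.

End Concatenation.

Lemma exists_least (P : nat -> Prop) n : P n -> exists m, P m /\ forall l, P l -> m <= l.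
Proof.
elim/ltn_ind: n => n IHn Pn.
have [[m [lt_mn Pm]] | no_smaller] := classic (exists m, m < n /\ P m).
  exact: IHn m lt_mn Pm.
by exists n; split=> // l Pl; rewrite leqNgt; apply/negP => lt_ln; apply: no_smaller; exists l.
Qed.

Lemma least_spec (P : nat -> Prop) n : P n -> P (least P) /\ forall m, P m -> least P <= m.
Proof.
move=> Pn; apply: (epsilon_spec (inhabits 0) (fun m => P m /\ forall l, P l -> m <= l)).
exact: exists_least Pn.
Qed.

Lemma leastP (P : nat -> Prop) n : P n -> P (least P).
Proof. by move=> /least_spec[]. Qed.

Lemma least_le (P : nat -> Prop) n : P n -> least P <= n.
Proof. by move=> Pn; apply: (least_spec Pn).2. Qed.

Definition tuple_of_fun (F : finFieldType) n (g : nat -> F) : n.-tuple F := [tuple g i | i < n].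

Lemma nth_tuple_of_fun (F : finFieldType) n (g : nat -> F) m :
  m < n -> nth 0%R (tuple_of_fun n g) m = g m.
Proof. by move=> lt_mn; rewrite -[m]/(nat_of_ord (Ordinal lt_mn)) nth_mktuple. Qed.

Definition repeat_tuple (F : finFieldType) k N (x : k.-tuple F) : (N * k).-tuple F :=
  tuple_of_fun (N * k) (fun i => nth 0%R x (i %% k)).

Lemma cyc_cat_repeat (F : finFieldType) k N (x : k.-tuple F) m :
  m < k + N * k -> cyc (cat_tuple x (repeat_tuple N x)) m = nth 0%R x (m %% k).
Proof.
move=> lt_m; rewrite /cyc modn_small // nth_cat size_tuple.
case: ltnP => [lt_mk | le_km]; first by rewrite modn_small.
rewrite nth_tuple_of_fun; last by lia.
by rewrite -{2}(subnK le_km) modnDr.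
Qed.

(* Without some code, [least] in [rbf] would return a junk value. *)
Lemma fcbsc_repetition (F : finFieldType) (T : eqType) k (f : k.-tuple F -> T) b t :
  0 < b -> 0 < k -> fcbsc_exists f b t ((2 * t + 1) * k).
Proof.
move=> b_gt0 k_gt0; exists (repeat_tuple (2 * t + 1)) => x1 x2 f_neq.
have [s lt_sk neq] : exists2 s, s < k & nth 0%R x1 s != nth 0%R x2 s.
  have /existsP[i neq] : [exists i : 'I_k, nth 0%R x1 i != nth 0%R x2 i].
    apply: contraNT f_neq; rewrite negb_exists => /forallP eq_x.
    suff -> : x1 = x2 by rewrite eqxx.
    by apply/eq_from_tnth => i; rewrite !(tnth_nth 0%R); apply/eqP/negbNE/eq_x.
  by exists i.
rewrite dsym_count -size_filter.
rewrite -[X in X <= _](size_iota 0) -(size_map (fun c => c * k + s)).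
apply: uniq_leq_size.
  rewrite map_inj_uniq ?iota_uniq // => c1 c2 /addIn /eqP.
  by rewrite eqn_pmul2r // => /eqP.
move=> m /mapP[c]; rewrite mem_iota add0n /= => lt_c ->.
have lt_ck : c * k + s < k + (2 * t + 1) * k.
  have : c.+1 * k <= (2 * t + 1) * k by rewrite leq_mul2r lt_c orbT.
  by rewrite mulSn; lia.
rewrite mem_filter mem_iota lt_ck !andbT.
apply: (window_neq_of_cyc_neq (m := c * k + s)); first by lia.
by rewrite !cyc_cat_repeat // modnMDl modn_small.
Qed.

Lemma exists_adjacent_f_neq (F : finFieldType) (T : eqType) k (f : k.-tuple F -> T) x1 x2 :
  f x1 != f x2 -> exists y1 y2 : k.-tuple F, f y1 != f y2 /\
    exists c, forall m, m != c -> nth 0%R y1 m = nth 0%R y2 m.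
Proof.
move=> f_neq.
pose y c := tuple_of_fun k (fun i => if i < c then nth 0%R x2 i else nth 0%R x1 i).
have nth_y c m : m < k -> nth 0%R (y c) m = if m < c then nth 0%R x2 m else nth 0%R x1 m.
  exact: nth_tuple_of_fun.
have y_eq c (x : k.-tuple F) : (forall m, m < k -> nth 0%R (y c) m = nth 0%R x m) -> y c = x.
  by move=> eq_yx; apply: eq_from_tnth => i; rewrite !(tnth_nth 0%R) eq_yx.
have [/existsP[c f_neq_c] | /existsPn f_eq] := boolP [exists c : 'I_k, f (y c) != f (y c.+1)].
  exists (y c), (y c.+1); split=> //; exists (c : nat) => m m_neq_c.
  have [lt_mk | le_km] := ltnP m k; last by rewrite !nth_default ?size_tuple.
  by rewrite !nth_y // ltnS ltn_neqAle m_neq_c.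
have f_y c : c <= k -> f (y c) = f (y 0).
  elim: c => // c IHc lt_ck; rewrite -IHc ?(ltnW lt_ck) //.
  by apply/esym/eqP/negbNE; exact: (f_eq (Ordinal lt_ck)).
move: f_neq; rewrite -(y_eq 0 x1) => [|m lt_mk]; last by rewrite nth_y.
by rewrite -(y_eq k x2) => [|m lt_mk]; rewrite ?nth_y ?lt_mk // f_y ?eqxx.
Qed.

Lemma dsym_le_single_diff (F : finFieldType) b k (y1 y2 : k.-tuple F) c :
  (forall m, m != c -> nth 0%R y1 m = nth 0%R y2 m) -> dsym b y1 y2 <= b.
Proof.
move=> eq_off_c; rewrite dsym_count -size_filter.
pose start j := (c + (k + b) * k - j) %% k.
rewrite -[X in _ <= X](size_iota 0) -(size_map start (iota 0 b)).
apply: uniq_leq_size; first exact/filter_uniq/iota_uniq.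
move=> i; rewrite mem_filter mem_iota /= => /andP[/existsP[j neq] lt_ik].
have mod_c : (i + j) %% k = c.
  by apply/eqP; apply: contraNT neq => /eq_off_c eq_y; rewrite /cyc eq_y eqxx.
apply/mapP; exists (nat_of_ord j); first by rewrite mem_iota /=.
set q := (i + j) %/ k.
have def_ij : i + j = q * k + c by rewrite -mod_c /q {1}(divn_eq (i + j) k).
have le_q_qk : q <= q * k by rewrite leq_pmulr //; lia.
have le_qk : q * k <= (k + b) * k by rewrite leq_mul2r; have := ltn_ord j; lia.
rewrite /start; have -> : c + (k + b) * k - j = (k + b - q) * k + i by rewrite mulnBl; lia.
by rewrite modnMDl modn_small.
Qed.

Theorem corollary3p3 (F : finFieldType) (k b t : nat) (T : eqType)
  (f : k.-tuple F -> T) :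
  (0 < k)%N -> (0 < b)%N -> (0 < t)%N ->
  (forall (M : nat) (x : 'I_M -> k.-tuple F), injective x ->
     (Nb F b (Bf1 f b t x) <= rbf f b t)%N)
  /\
  ((exists x1 x2 : k.-tuple F, f x1 != f x2) -> (b - 1 < t)%N ->
     (2 * (t - b + 1) <= rbf f b t)%N).
Proof.
move=> k_gt0 b_gt0 _; rewrite /rbf.
have [p p_code] := leastP (fcbsc_repetition f t b_gt0 k_gt0).
have code_split x1 x2 : f x1 != f x2 ->
    2 * t + 1 <= dsym b x1 x2 + dsym b (p x1) (p x2) + b.-1.
  by move=> f_neq; apply: leq_trans (p_code _ _ f_neq) _; exact: dsym_cat_le.
split=> [M x _ | [x1 [x2 f_neq]] lt_b_t].
  apply: least_le; exists (fun i => p (x i)) => i j; rewrite mxE.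
  by case: ifP => // f_neq; have := code_split _ _ f_neq; lia.
have [y1 [y2 [f_neq_y [c eq_off_c]]]] := exists_adjacent_f_neq f_neq.
have := code_split _ _ f_neq_y; have := dsym_le_single_diff b eq_off_c.
have : dsym b (p y1) (p y2) <= least (fcbsc_exists f b t).
  by rewrite /dsym (leq_trans (max_card _)) ?card_ord.
lia.
Qed.
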